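(* Let $v\ge 2$ be an integer and let $\theta\in[0,1]$. Play the tipsy cop and drunken robber game on the complete graph $K_v$, with the cop and robber starting at distinct vertices. Then the probability that the robber remains free after $m$ moves is \[ P_m(K_v)=\theta^{\lfloor m/2\rfloor}\left(\frac{v-2}{v-1}\right)^m \qquad (m\ge 0). \]
   Context: Tipsy cop and drunken robber game on a finite connected graph $G$: a cop and a robber are placed at distinct vertices. Moves are numbered $1,2,3,\dots$; the robber makes the odd-numbered moves and the cop the even-numbered moves, and on each move the mover must move to a vertex adjacent to its current vertex (staying put is not allowed). The robber always moves to a neighbor chosen uniformly at random. The cop, independently at each of her moves, with probability $\theta$ moves to a neighbor chosen uniformly at random, and with probability $1-\theta$ makes a directed move to a neighbor lying on a shortest path to the robber's current vertex (in particular onto the robber's vertex if it is adjacent). All random choices are independent. The robber is captured (and the game ends) as soon as both occupy the same vertex, whether the robber moves onto the cop or the cop moves onto the robber. $P_m(G)$ denotes the probability that the robber has not been captured during the first $m$ moves ($P_0(G)=1$). *)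

From mathcomp Require Import all_boot all_order all_algebra.
Set Implicit Arguments. Unset Strict Implicit. Unset Printing Implicit Defensive.
Import Order.TTheory GRing.Theory Num.Theory.
Local Open Scope ring_scope.

Section Game.
Variables (R : realFieldType) (V : finType) (adj : rel V).

Definition nbhd (x : V) : {set V} := [set y | adj x y].
Definition deg (x : V) : nat := #|nbhd x|.

Fixpoint ball (k : nat) (x : V) : {set V} :=
  match k with
  | 0 => [set x]
  | k'.+1 => ball k' x :|: \bigcup_(z in ball k' x) nbhd z
  end.

(* graph distance (correct for connected graphs; distances are < #|V|) *)
Definition dist (x y : V) : nat :=
  find (fun k => y \in ball k x) (iota 0 #|V|).

Definition toward (c r : V) : {set V} :=
  [set y in nbhd c | (dist y r).+1 == dist c r].

Definition robber_step (r r' : V) : R :=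
  if adj r r' then (deg r)%:R^-1 else 0.

Definition cop_step (theta : R) (r c c' : V) : R :=
  theta * (if adj c c' then (deg c)%:R^-1 else 0)
  + (1 - theta) * (if c' \in toward c r then (#|toward c r|)%:R^-1 else 0).

(* surv theta c0 r0 m c r = probability that after the first m moves the
   robber has not been captured and the cop is at c, the robber at r.
   Move m+1 is a robber move iff m is even. Captured mass is discarded. *)
Fixpoint surv (theta : R) (c0 r0 : V) (m : nat) : V -> V -> R :=
  match m with
  | 0 => fun c r => if (c == c0) && (r == r0) then 1 else 0
  | m'.+1 =>
    let f := surv theta c0 r0 m' in
    if ~~ odd m' then
      fun c r => if c == r then 0 else \sum_(r1 : V) f c r1 * robber_step r1 r
    else
      fun c r => if c == r then 0 else \sum_(c1 : V) f c1 r * cop_step theta r c1 c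
  end.

Definition P_free (theta : R) (c0 r0 : V) (m : nat) : R :=
  \sum_(c : V) \sum_(r : V) surv theta c0 r0 m c r.

End Game.

Definition complete_adj (v : nat) : rel 'I_v := fun x y => x != y.

From mathcomp Require Import all_boot all_order all_algebra ring.
Import Order.TTheory GRing.Theory Num.Theory.

Set Implicit Arguments.
Unset Strict Implicit.
Unset Printing Implicit Defensive.

Local Open Scope ring_scope.

(* If, from every state where cop and robber are apart, the next move avoids
   capture with the same probability k, then P_{m+1} = k P_m.  On K_v the
   robber steps onto the cop with probability 1/(v-1), so k = (v-2)/(v-1) for
   its moves; the cop's directed move always captures, and its random move
   captures with probability 1/(v-1), so k = theta (v-2)/(v-1) for hers. *)

Section Game.
Variables (R : realFieldType) (V : finType) (adj : rel V) (theta : R).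

Lemma dist_eq0 (x y : V) : (dist adj x y == 0%N) = (x == y).
Proof.
rewrite /dist; have: (0 < #|V|)%N by apply/card_gt0P; exists x.
case: #|V| => // n _ /=; rewrite inE [y == x]eq_sym.
by case: (x == y).
Qed.

Lemma dist_adj (x y : V) : x != y -> adj x y -> dist adj x y = 1%N.
Proof.
move=> nxy axy; have: (2 <= #|V|)%N.
  by have := subset_leq_card (subsetT [set x; y]); rewrite cards2 nxy cardsT.
rewrite /dist; case: #|V| => [|[|n]] //= _.
rewrite !inE eq_sym (negbTE nxy) /=.
by case: ifP => // /negP[]; apply/bigcupP; exists x; rewrite !inE.
Qed.

Lemma toward_adj (c r : V) : c != r -> adj c r -> toward adj c r = [set r].
Proof.
move=> ncr acr; apply/setP => y.
rewrite !inE [dist adj c r]dist_adj // eqSS dist_eq0.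
by case: eqVneq => [->|]; rewrite ?acr ?andbF.
Qed.

Variables (c0 r0 : V).
Hypothesis c0_neq_r0 : c0 != r0.

Local Notation S := (surv adj theta c0 r0).
Local Notation P := (P_free adj theta c0 r0).

Lemma P_free0 : P 0 = 1.
Proof.
rewrite /P_free /= (bigD1 c0) //= (bigD1 r0) //= !eqxx.
rewrite [X in _ + X = _]big1 => [|c /negbTE c_neq]; last first.
  by rewrite big1 // => r; rewrite c_neq.
by rewrite /= addr0 big1 ?addr0 // => r /negbTE->.
Qed.

Lemma surv_diag m c : S m c c = 0.
Proof.
case: m => [|m] /=; last by case: ifP; rewrite eqxx.
by case: eqVneq => [->|]; rewrite ?(negbTE c0_neq_r0) ?andbF.
Qed.

Lemma sum_surv_const_escape m (E : V -> V -> R) k :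
    (forall c r, c != r -> E c r = k) ->
  \sum_c \sum_r S m c r * E c r = k * P m.
Proof.
move=> Ek; rewrite mulr_sumr; apply: eq_bigr => c _.
rewrite mulr_sumr; apply: eq_bigr => r _.
case: (eqVneq c r) => [<-|/Ek->]; first by rewrite surv_diag !mul0r mulr0.
by rewrite mulrC.
Qed.

Lemma sum_off_diag (x : V) (F : V -> R) :
  \sum_y (if y == x then 0 else F y) = \sum_(y | y != x) F y.
Proof. by rewrite [RHS]big_mkcond; apply: eq_bigr => y _; case: eqP. Qed.

Lemma P_free_robber_move m k : ~~ odd m ->
    (forall c r, c != r -> \sum_(r' | r' != c) robber_step R adj r r' = k) ->
  P m.+1 = k * P m.
Proof.
move=> even_m escape; rewrite -(sum_surv_const_escape m escape).
rewrite /P_free /= even_m; apply: eq_bigr => c _.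
under eq_bigr do rewrite eq_sym.
rewrite sum_off_diag exchange_big; apply: eq_bigr => r _.
by rewrite mulr_sumr.
Qed.

Lemma P_free_cop_move m k : odd m ->
    (forall c r, c != r -> \sum_(c' | c' != r) cop_step adj theta r c c' = k) ->
  P m.+1 = k * P m.
Proof.
move=> odd_m escape; rewrite -(sum_surv_const_escape m escape).
rewrite /P_free /= odd_m /= exchange_big [RHS]exchange_big.
apply: eq_bigr => r _.
rewrite sum_off_diag exchange_big; apply: eq_bigr => c _.
by rewrite mulr_sumr.
Qed.

End Game.

Lemma sum_avoid2 (R : nzRingType) (T : finType) (x y : T) (w : R) : x != y ->
  \sum_(z | z != x) (if y != z then w else 0) = (#|T| - 2)%:R * w.
Proof.
move=> nxy; rewrite -big_mkcondr sumr_const mulr_natl; congr (_ *+ _).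
have := cardsC [set x; y]; rewrite cards2 nxy => <-; rewrite addKn.
by apply: eq_card => z; rewrite !inE negb_or unfold_in /= [y == z]eq_sym.
Qed.

Section CompleteGraph.
Variables (R : realFieldType) (v : nat) (theta : R).
Local Notation adj := (@complete_adj v).
Local Notation a := ((v - 2)%N%:R / (v - 1)%N%:R : R).

Lemma deg_complete x : deg adj x = (v - 1)%N.
Proof.
rewrite /deg -[v in RHS]card_ord subn1 -(cardsC1 x); apply: eq_card => y.
by rewrite !inE eq_sym.
Qed.

Lemma robber_escape_complete c r : c != r ->
  \sum_(r' | r' != c) robber_step R adj r r' = a.
Proof.
move=> ncr.
rewrite (eq_bigr (fun r' => if r != r' then (v - 1)%N%:R^-1 else 0)).
  by rewrite sum_avoid2 // card_ord.
by move=> r' _; rewrite /robber_step deg_complete.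
Qed.

Lemma cop_escape_complete c r : c != r ->
  \sum_(c' | c' != r) cop_step adj theta r c c' = theta * a.
Proof.
move=> ncr.
rewrite (eq_bigr (fun c' => if c != c' then theta * (v - 1)%N%:R^-1 else 0)).
  by rewrite sum_avoid2 1?eq_sym // card_ord mulrCA.
move=> c' nc'r; rewrite /cop_step toward_adj // deg_complete inE (negbTE nc'r).
by rewrite mulr0 addr0 /complete_adj; case: (c != c'); rewrite ?mulr0.
Qed.

End CompleteGraph.

Theorem mainTheorem1 (R : realFieldType) (v : nat) (theta : R)
  (c0 r0 : 'I_v) (m : nat) :
  (2 <= v)%N -> 0 <= theta <= 1 -> c0 != r0 ->
  @P_free R _ (@complete_adj v) theta c0 r0 m
  = theta ^+ (m./2) * (((v - 2)%N%:R / (v - 1)%N%:R) ^+ m).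
Proof.
move=> _ _ c0_neq_r0; elim: m => [|m IH]; first by rewrite P_free0 ?mulr1.
have half_succ : m.+1./2 = (odd m + m./2)%N by rewrite -uphalf_half.
have [odd_m|even_m] := boolP (odd m).
- rewrite (P_free_cop_move c0_neq_r0 odd_m (@cop_escape_complete R v theta)) IH.
  by rewrite half_succ odd_m exprS exprS; ring.
- rewrite (P_free_robber_move theta c0_neq_r0 even_m
    (@robber_escape_complete R v)) IH.
  by rewrite half_succ (negbTE even_m) exprS; ring.
Qed.
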